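(* Let $X$ be a Hausdorff space with base point $*$ and $\tilde C$ a locally trivial numerable $X$-pregroupoid. Then there exists a unique Hausdorff locally trivial numerable $X$-groupoid $C$ together with a continuous surjective morphism $\tilde C\to C$ satisfying: every representation of $\tilde C$ on a principal $G$-bundle $\xi$ over $X$, with $G$ a Hausdorff topological group, is induced by a unique representation of $C$ on $\xi$.
   Context: An $X$-pregroupoid is a space $\tilde C$ with continuous $\alpha,\beta:\tilde C\to X$, a continuous associative partial composition on $\{(c_1,c_2):\alpha(c_1)=\beta(c_2)\}$ with $\alpha(c_1c_2)=\alpha(c_2)$, $\beta(c_1c_2)=\beta(c_1)$, continuous units $x\mapsto i_x$ neutral on both sides, and a continuous anti-involution $c\mapsto\bar c$ sending $\tilde C_x^y$ to $\tilde C_y^x$ (no inverse condition); $\tilde C_x=\alpha^{-1}(x)$, $\tilde C^y=\beta^{-1}(y)$. An $X$-groupoid is the same with an inversion $c\mapsto c^{-1}$ satisfying $cc^{-1}$, $c^{-1}c$ units. Locally trivial numerable: the domains of contractions (continuous $\rho:U_\rho\to\tilde C^*$, $U_\rho$ open, $\alpha\rho(x)=x$) cover $X$ with a subordinate partition of unity. A morphism $\tilde C\to C$ is a map over $\mathrm{id}_X$ compatible with $\alpha,\beta$, composition, units, and sending $\bar c$ to the inverse. A representation of $\tilde C$ on a principal $G$-bundle $\xi=(E\xrightarrow{p}X)$ is a continuous $w:\tilde C\times_XE\to E$ with $p(w(c,z))=\beta(c)$, $w(cd,z)=w(c,w(d,z))$, $w(\bar c,w(c,z))=z$, $w(c,zg)=w(c,z)g$;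 for groupoids the third axiom reads $w(c^{-1},w(c,z))=z$. A representation $w$ of $C$ induces the representation $(c,z)\mapsto w(\pi(c),z)$ of $\tilde C$, $\pi:\tilde C\to C$ the morphism. *)

From HB Require Import structures.
From mathcomp Require Import all_boot all_order all_algebra.
From mathcomp Require Import all_classical all_reals all_analysis.
From mathcomp Require Import Rstruct Rstruct_topology.
From Stdlib Require Import Reals.
Set Implicit Arguments. Unset Strict Implicit. Unset Printing Implicit Defensive.
Import Order.TTheory GRing.Theory Num.Theory.
Local Open Scope classical_set_scope.
Local Open Scope ring_scope.

(* Data of an X-pregroupoid on the space C:
   src = alpha, tgt = beta, cmp c1 c2 = c1 c2 (defined when src c1 = tgt c2),
   unt x = i_x, bar c = anti-involution. *)
Record pgdata (X C : Type) := PGData {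
  src : C -> X; tgt : C -> X; cmp : C -> C -> C; unt : X -> C; bar : C -> C }.

Definition is_pregroupoid (X C : topologicalType) (D : pgdata X C) : Prop :=
  [/\ continuous (src D), continuous (tgt D),
      {within [set p : C * C | src D p.1 = tgt D p.2],
         continuous (fun p => cmp D p.1 p.2)},
      continuous (unt D) & continuous (bar D)] /\
  [/\ (forall c1 c2, src D c1 = tgt D c2 ->
         src D (cmp D c1 c2) = src D c2 /\ tgt D (cmp D c1 c2) = tgt D c1),
      (forall c1 c2 c3, src D c1 = tgt D c2 -> src D c2 = tgt D c3 ->
         cmp D (cmp D c1 c2) c3 = cmp D c1 (cmp D c2 c3)),
      (forall x, src D (unt D x) = x /\ tgt D (unt D x) = x),
      (forall c, cmp D (unt D (tgt D c)) c = c /\ cmp D c (unt D (src D c)) = c) &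
      [/\ (forall c, bar D (bar D c) = c),
          (forall c, src D (bar D c) = tgt D c /\ tgt D (bar D c) = src D c) &
          (forall c1 c2, src D c1 = tgt D c2 ->
             bar D (cmp D c1 c2) = cmp D (bar D c2) (bar D c1))]].

Definition is_groupoid (X C : topologicalType) (D : pgdata X C) : Prop :=
  is_pregroupoid D /\
  forall c, cmp D c (bar D c) = unt D (tgt D c) /\ cmp D (bar D c) c = unt D (src D c).

Definition numerable_subordinate (X : topologicalType) (P : set X -> Prop) : Prop :=
  exists (J : choiceType) (phi : J -> X -> R),
    [/\ (forall j, continuous (phi j)),
        (forall j x, 0 <= phi j x <= 1),
        (forall x : X, exists2 N : set X, nbhs x N &
            finite_set [set j | exists2 y, N y & phi j y != 0]),
        (forall x, (\sum_(j \in [set j | phi j x != 0]) phi j x)%R = 1) &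
        (forall j, exists2 U, P U & closure [set x | phi j x != 0] `<=` U)].

Definition contraction_domain (X C : topologicalType) (x0 : X) (D : pgdata X C)
  (U : set X) : Prop :=
  open U /\ exists rho : X -> C,
    {within U, continuous rho} /\
    forall x, U x -> src D (rho x) = x /\ tgt D (rho x) = x0.

Definition locally_trivial_numerable (X C : topologicalType) (x0 : X)
  (D : pgdata X C) : Prop :=
  numerable_subordinate (contraction_domain x0 D).

Definition is_morphism (X C1 C2 : Type) (D1 : pgdata X C1) (D2 : pgdata X C2)
  (f : C1 -> C2) : Prop :=
  [/\ (forall c, src D2 (f c) = src D1 c /\ tgt D2 (f c) = tgt D1 c),
      (forall c d, src D1 c = tgt D1 d -> f (cmp D1 c d) = cmp D2 (f c) (f d)),
      (forall x, f (unt D1 x) = unt D2 x) &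
      (forall c, f (bar D1 c) = bar D2 (f c))].

Definition is_topgroup (G : topologicalType) (mul : G -> G -> G) (one : G)
  (inv : G -> G) : Prop :=
  [/\ (forall a b c, mul a (mul b c) = mul (mul a b) c),
      (forall a, mul one a = a /\ mul a one = a),
      (forall a, mul (inv a) a = one /\ mul a (inv a) = one),
      continuous (fun ab : G * G => mul ab.1 ab.2) & continuous inv].

Definition principal_bundle (X E G : topologicalType) (mul : G -> G -> G)
  (one : G) (p : E -> X) (act : E -> G -> E) : Prop :=
  [/\ continuous p /\ continuous (fun zg : E * G => act zg.1 zg.2),
      (forall z, act z one = z) /\ (forall z g h, act (act z g) h = act z (mul g h)),
      (forall z g, p (act z g) = p z),
      (forall z z', p z = p z' -> exists! g, act z g = z') /\
      (exists tau : E -> E -> G,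
         {within [set zz : E * E | p zz.1 = p zz.2],
            continuous (fun zz => tau zz.1 zz.2)} /\
         forall z z', p z = p z' -> act z (tau z z') = z') &
      (forall x, exists U, [/\ open U, U x &
         exists s : X -> E, {within U, continuous s} /\
           forall y, U y -> p (s y) = y])].

Definition is_representation (X C E G : topologicalType) (D : pgdata X C)
  (p : E -> X) (act : E -> G -> E) (w : C -> E -> E) : Prop :=
  [/\ {within [set cz : C * E | src D cz.1 = p cz.2],
         continuous (fun cz => w cz.1 cz.2)},
      (forall c z, src D c = p z -> p (w c z) = tgt D c),
      (forall c d z, src D c = tgt D d -> src D d = p z ->
          w (cmp D c d) z = w c (w d z)),
      (forall c z, src D c = p z -> w (bar D c) (w c z) = z) &
      (forall c z g, src D c = p z -> w c (act z g) = act (w c z) g)].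

Definition induced_by (X Ct C E : Type) (Dt : pgdata X Ct) (p : E -> X)
  (f : Ct -> C) (w : C -> E -> E) (wt : Ct -> E -> E) : Prop :=
  forall c z, src Dt c = p z -> wt c z = w (f c) z.

Definition reps_factor (X Ct C : topologicalType) (Dt : pgdata X Ct)
  (D : pgdata X C) (f : Ct -> C) : Prop :=
  forall (G : topologicalType) (mul : G -> G -> G) (one : G) (inv : G -> G),
    hausdorff_space G -> is_topgroup mul one inv ->
  forall (E : topologicalType) (p : E -> X) (act : E -> G -> E),
    principal_bundle mul one p act ->
  forall wt : Ct -> E -> E, is_representation Dt p act wt ->
    exists w : C -> E -> E,
      [/\ is_representation D p act w, induced_by Dt p f w wt &
          forall w', is_representation D p act w' -> induced_by Dt p f w' wt ->
            forall c z, src D c = p z -> w' c z = w c z].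

Definition good_quotient (X Ct C : topologicalType) (x0 : X) (Dt : pgdata X Ct)
  (D : pgdata X C) (f : Ct -> C) : Prop :=
  [/\ hausdorff_space C /\ is_groupoid D, locally_trivial_numerable x0 D,
      continuous f /\ (forall y, exists c, f c = y),
      is_morphism Dt D f & reps_factor Dt D f].

From HB Require Import structures.
From mathcomp Require Import all_boot all_order all_algebra.
From mathcomp Require Import all_classical all_reals all_analysis.
From mathcomp Require Import Rstruct Rstruct_topology.
Set Implicit Arguments. Unset Strict Implicit. Unset Printing Implicit Defensive.
Local Open Scope classical_set_scope.

(* Call two arrows of [Dt] equivalent when they have the same ends and act
   identically in every representation on a principal bundle with Hausdorff
   structure group.  In any representation [c \bar c] acts as the identity, so
   the quotient [C] is a groupoid, and every representation descends to it by
   construction.  [C] carries the coarsest topology making [src], [tgt] and the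
   maps [[c] |-> w c (s (src c))] continuous, for all representations [w] and
   local sections [s]; in a local trivialisation the descended action is built
   from these maps and the division map of the bundle, hence continuous, and
   two classes differing in some [w] are separated by the corresponding group
   element.
   For uniqueness, let [f' : Ct -> C'] be another such quotient.  The arrows of
   [C'] issuing from [x0] form a principal bundle over [X] (via [tgt]) under the
   vertex group at [x0], locally trivial by the contractions of [C'], and [Dt]
   acts on it by left translation through [f'].  This representation factors
   through [C], which forces [f' c1 = f' c2] whenever [f c1 = f c2]; the induced
   map [C -> C'] is continuous because it is locally expressed through the
   factored representation and a contraction. *)

(* Relative continuity on [A] in open-set form (equivalent to
   [{within A, continuous f}] by [cont_withinP]); it composes without going
   through [subspace A]. *)
Definition cont_within {T S : topologicalType} (A : set T) (f : T -> S) :=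
  forall x, A x -> forall V, open V -> V (f x) ->
    exists U, [/\ open U, U x & forall y, U y -> A y -> V (f y)].

Section ContWithin.
Context {T S R : topologicalType}.

Lemma cont_withinP (A : set T) (f : T -> S) :
  cont_within A f <-> {within A, continuous f}.
Proof.
rewrite continuousP; split=> [cf V oV|cf x Ax V oV Vfx].
  apply/open_subspaceP.
  exists (\bigcup_(U in [set U | open U /\ forall y, U y -> A y -> V (f y)]) U).
    by apply: bigcup_open => U [].
  rewrite eqEsubset; split=> y [].
    by move=> [U [_ UV] Uy] Ay; split=> //; exact: UV.
  move=> Vfy Ay; split=> //.
  by have [U [oU Uy UV]] := cf y Ay V oV Vfy; exists U.
have /open_subspaceP [U oU UE] := cf V oV.
exists U; split=> [//||y Uy Ay].
  by have : (f @^-1` V `&` A) x by []; rewrite -UE => -[].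
by have : (U `&` A) y by []; rewrite UE => -[].
Qed.

Lemma continuous_cont_within (A : set T) (f : T -> S) :
  continuous f -> cont_within A f.
Proof.
move=> /continuousP cf x Ax V oV Vfx; exists (f @^-1` V); split=> //.
exact: cf.
Qed.

Lemma cont_within_setT (f : T -> S) : cont_within setT f -> continuous f.
Proof. by move=> /cont_withinP cf; apply/continuous_subspace_setT. Qed.

Lemma cont_within_comp (A : set T) (B : set S) (f : T -> S) (g : S -> R) :
  cont_within A f -> cont_within B g -> (forall x, A x -> B (f x)) ->
  cont_within A (fun x => g (f x)).
Proof.
move=> cf cg AB x Ax V oV Vgfx.
have [U' [oU' U'fx U'V]] := cg (f x) (AB x Ax) V oV Vgfx.
have [U [oU Ux UU']] := cf x Ax U' oU' U'fx.
by exists U; split=> // y Uy Ay; apply: U'V; [exact: UU'|exact: AB].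
Qed.

Lemma cont_within_subset (A B : set T) (f : T -> S) :
  B `<=` A -> cont_within A f -> cont_within B f.
Proof.
move=> BA cf x Bx V oV Vfx; have [U [oU Ux UV]] := cf x (BA x Bx) V oV Vfx.
by exists U; split=> // y Uy By; apply: UV => //; apply: BA.
Qed.

Lemma cont_within_ext (A : set T) (f g : T -> S) :
  (forall x, A x -> f x = g x) -> cont_within A f -> cont_within A g.
Proof.
move=> fg cf x Ax V oV; rewrite -fg // => Vfx.
have [U [oU Ux UV]] := cf x Ax V oV Vfx.
by exists U; split=> // y Uy Ay; rewrite -fg //; apply: UV.
Qed.

Lemma cont_within_local (A : set T) (f : T -> S) :
  (forall x, A x -> exists U, [/\ open U, U x & cont_within (A `&` U) f]) ->
  cont_within A f.
Proof.
move=> H x Ax V oV Vfx; have [U0 [oU0 U0x cf]] := H x Ax.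
have [U1 [oU1 U1x UV]] := cf x (conj Ax U0x) V oV Vfx.
exists (U0 `&` U1); split=> //; first exact: openI.
by move=> y [U0y U1y] Ay; apply: UV.
Qed.

Lemma cont_within_id {A : set T} : cont_within A id.
Proof. by move=> x Ax V oV Vx; exists V. Qed.

Lemma open_cont_within_preimage (A : set T) (f : T -> S) (V : set S) :
  open A -> cont_within A f -> open V -> open (A `&` f @^-1` V).
Proof.
move=> oA cf oV; rewrite openE => x [Ax Vfx].
have [U [oU Ux UV]] := cf x Ax V oV Vfx.
have : nbhs x (U `&` A) by apply: open_nbhs_nbhs; split => //; exact: openI.
by apply: filterS => y [Uy Ay]; split=> //; exact: UV.
Qed.

End ContWithin.

Section ContWithinProd.
Context {T S1 S2 : topologicalType}.

Lemma open_setX (V1 : set S1) (V2 : set S2) :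
  open V1 -> open V2 -> open (V1 `*` V2).
Proof.
move=> o1 o2; rewrite openE => -[a b] [/= V1a V2b].
by exists (V1, V2) => //; split; apply: open_nbhs_nbhs.
Qed.

Lemma open_prod_rectangle (V : set (S1 * S2)) a b : open V -> V (a, b) ->
  exists V1 V2, [/\ open V1, open V2, V1 a, V2 b & V1 `*` V2 `<=` V].
Proof.
move=> oV Vab; have : nbhs (a, b) V by apply: open_nbhs_nbhs.
case=> -[P1 P2] /= [+ +] sP; rewrite !nbhsE => -[B1 [oB1 B1a] s1] [B2 [oB2 B2b] s2].
by exists B1, B2; split=> // -[y1 y2] [/= /s1 ? /s2 ?]; exact: sP.
Qed.

Lemma cont_within_pair (A : set T) (f : T -> S1) (g : T -> S2) :
  cont_within A f -> cont_within A g -> cont_within A (fun x => (f x, g x)).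
Proof.
move=> cf cg x Ax V oV Vx.
have [V1 [V2 [oV1 oV2 V1f V2g sV]]] := open_prod_rectangle oV Vx.
have [U1 [oU1 U1x H1]] := cf x Ax V1 oV1 V1f.
have [U2 [oU2 U2x H2]] := cg x Ax V2 oV2 V2g.
exists (U1 `&` U2); split=> //; first exact: openI.
by move=> y [U1y U2y] Ay; apply: sV; split; [apply: H1|apply: H2].
Qed.

Lemma cont_within_fst {A : set (S1 * S2)} : cont_within A fst.
Proof.
move=> x Ax V oV Vx; exists (V `*` setT); split=> [||y []] //.
by apply: open_setX => //; exact: openT.
Qed.

Lemma cont_within_snd {A : set (S1 * S2)} : cont_within A snd.
Proof.
move=> x Ax V oV Vx; exists (setT `*` V); split=> [||y []] //.
by apply: open_setX => //; exact: openT.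
Qed.

End ContWithinProd.

Lemma hausdorffP {T : topologicalType} : hausdorff_space T <->
  forall x y : T, x <> y -> exists U V, [/\ open U, open V, U x, V y &
     forall z, U z -> V z -> False].
Proof.
rewrite open_hausdorff; split=> H x y /eqP.
  move=> /H [[U V] [/= + +] [oU oV /eqP UV]]; rewrite !in_setE => xU yV.
  exists U, V; split=> // z Uz Vz.
  by have : (U `&` V) z by []; rewrite UV.
move=> /H [U [V [oU oV Ux Vy UV]]].
exists (U, V); first by split; rewrite in_setE.
by split=> //; apply/eqP; rewrite -subset0 => z [] /=; exact: UV.
Qed.

Lemma set_type_hausdorff {T : topologicalType} (A : set T) :
  hausdorff_space T -> hausdorff_space (set_type A).
Proof.
move=> /hausdorffP hT; apply/hausdorffP => a b ne.
have /hT [U [V [oU oV Ua Vb UV]]] : val a <> val b by move=> /val_inj.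
exists (val @^-1` U), (val @^-1` V); split => //; [by exists U|by exists V|].
by move=> z; apply: UV.
Qed.

Lemma separate_by_cont_within {T S : topologicalType} (A : set T) (f : T -> S) x y :
  hausdorff_space S -> open A -> cont_within A f -> A x -> A y -> f x <> f y ->
  exists U V, [/\ open U, open V, U x, V y & forall z, U z -> V z -> False].
Proof.
move=> /hausdorffP hS oA cf Ax Ay /hS [U [V [oU oV Ufx Vfy UV]]].
exists (A `&` f @^-1` U), (A `&` f @^-1` V).
split; [exact: open_cont_within_preimage|exact: open_cont_within_preimage|by []|by []|].
by move=> z [_ Uz] [_ Vz]; exact: UV Uz Vz.
Qed.

Section SetTypeContinuity.
Context {T S : topologicalType} (A : set S).

Lemma val_insubd_set (u0 : set_type A) x : A x -> val (insubd u0 x) = x.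
Proof. by move=> Ax; rewrite val_insubd (mem_set Ax). Qed.

Lemma cont_within_val (B : set T) (h : T -> set_type A) :
  cont_within B h -> cont_within B (fun t => val (h t)).
Proof.
move=> ch x Bx V oV Vx.
have [U [oU Ux UV]] := ch x Bx (val @^-1` V) (ex_intro2 _ _ V oV erefl) Vx.
by exists U; split=> // y Uy By; exact: UV.
Qed.

Lemma cont_within_to_set_type (B : set T) (h : T -> set_type A) :
  cont_within B (fun t => val (h t)) -> cont_within B h.
Proof.
move=> ch x Bx _ [V oV <-] Vx; have [U [oU Ux UV]] := ch x Bx V oV Vx.
by exists U; split=> // y Uy By; exact: UV.
Qed.

End SetTypeContinuity.

Section GeneratedTopology.
Variables (T : Type) (B : set_system T).

Definition generated_open (A : set T) : Prop :=
  forall F : set_system T, F setT -> setI_closed F ->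
    (forall AA : set_system T, AA `<=` F -> F (\bigcup_(A in AA) A)) ->
    B `<=` F -> F A.

Lemma generated_openT : generated_open setT.
Proof. by move=> F. Qed.

Lemma generated_openI : setI_closed generated_open.
Proof.
by move=> A1 A2 o1 o2 F FT FI FU FB; exact: FI (o1 F FT FI FU FB) (o2 F FT FI FU FB).
Qed.

Lemma generated_open_bigU (I : Type) (f : I -> set T) :
  (forall i, generated_open (f i)) -> generated_open (\bigcup_i f i).
Proof.
move=> ofi F FT FI FU FB; rewrite -(bigcup_image setT f id).
by apply: (FU) => _ [i _ <-]; exact: ofi i F FT FI FU FB.
Qed.

Lemma generated_open_subbase : B `<=` generated_open.
Proof. by move=> A BA F _ _ _; apply. Qed.

End GeneratedTopology.

Lemma numerable_subordinate_mono (X : topologicalType) (P P' : set X -> Prop) :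
  (forall U, P U -> P' U) -> numerable_subordinate P -> numerable_subordinate P'.
Proof.
move=> PP' [J [phi [cphi phi01 lf sum1 sub]]]; exists J, phi; split=> // j.
by have [U PU sU] := sub j; exists U => //; apply: PP'.
Qed.

Lemma numerable_subordinate_cover (X : topologicalType) (P : set X -> Prop) :
  numerable_subordinate P -> forall x, exists U, P U /\ U x.
Proof.
move=> [J [phi [_ _ _ sum1 sub]]] x.
have [j /eqP nj] : exists j, (phi j x != 0)%R.
  apply: contrapT => nex; have := sum1 x.
  rewrite fsbig1 => [/esym/eqP|i /= ni]; first by rewrite GRing.oner_eq0.
  by exfalso; apply: nex; exists i.
have [U PU sU] := sub j; exists U; split=> //.
by apply: sU; apply: subset_closure; exact/eqP.
Qed.

(* The algebraic half of [is_pregroupoid]: [(is_pregroupoid D).2] has this type. *)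
Definition pregroupoid_laws (X C : Type) (D : pgdata X C) : Prop :=
  [/\ (forall c1 c2, src D c1 = tgt D c2 ->
         src D (cmp D c1 c2) = src D c2 /\ tgt D (cmp D c1 c2) = tgt D c1),
      (forall c1 c2 c3, src D c1 = tgt D c2 -> src D c2 = tgt D c3 ->
         cmp D (cmp D c1 c2) c3 = cmp D c1 (cmp D c2 c3)),
      (forall x, src D (unt D x) = x /\ tgt D (unt D x) = x),
      (forall c, cmp D (unt D (tgt D c)) c = c /\ cmp D c (unt D (src D c)) = c) &
      [/\ (forall c, bar D (bar D c) = c),
          (forall c, src D (bar D c) = tgt D c /\ tgt D (bar D c) = src D c) &
          (forall c1 c2, src D c1 = tgt D c2 ->
             bar D (cmp D c1 c2) = cmp D (bar D c2) (bar D c1))]].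

Definition inverse_laws (X C : Type) (D : pgdata X C) : Prop :=
  forall c, cmp D c (bar D c) = unt D (tgt D c) /\ cmp D (bar D c) c = unt D (src D c).

Section GroupoidLaws.
Variables (X C : Type) (D : pgdata X C).
Hypotheses (laws : pregroupoid_laws D) (iv : inverse_laws D).

Lemma cmp_barK a z : src D a = tgt D z -> cmp D (cmp D a z) (bar D z) = a.
Proof.
have [_ aC _ uC [_ sB _]] := laws.
by move=> az; rewrite aC ?(sB z).2 // (iv z).1 -az (uC a).2.
Qed.

Lemma cmp_Kbar a z : src D a = src D z -> cmp D (cmp D a (bar D z)) z = a.
Proof.
have [_ _ _ _ [bb sB _]] := laws.
by move=> az; rewrite -{2}(bb z) cmp_barK // (sB z).2.
Qed.

Lemma groupoid_cancel_r a b z :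
  src D a = tgt D z -> src D b = tgt D z -> cmp D a z = cmp D b z -> a = b.
Proof. by move=> az bz e; rewrite -(cmp_barK az) e cmp_barK. Qed.

End GroupoidLaws.

Section GroupoidContinuity.
Context {X C : topologicalType} (D : pgdata X C).
Hypothesis hD : is_pregroupoid D.

Lemma cmp_cont_within (T : topologicalType) (A : set T) (a b : T -> C) :
  cont_within A a -> cont_within A b -> (forall t, A t -> src D (a t) = tgt D (b t)) ->
  cont_within A (fun t => cmp D (a t) (b t)).
Proof.
have [[_ _ /cont_withinP ccmp _ _] _] := hD => ca cb ab.
exact: (cont_within_comp (cont_within_pair ca cb) ccmp).
Qed.

Lemma bar_cont_within (T : topologicalType) (A : set T) (a : T -> C) :
  cont_within A a -> cont_within A (fun t => bar D (a t)).
Proof.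
have [[_ _ _ _ cbar] _] := hD => ca.
by apply: (cont_within_comp ca (B := setT)) => //; exact: continuous_cont_within.
Qed.

End GroupoidContinuity.

Section PrincipalBundle.
Context {X E G : topologicalType} (mul : G -> G -> G) (one : G) (p : E -> X)
  (act : E -> G -> E).
Hypothesis pb : principal_bundle mul one p act.

Lemma bundle_proj_continuous : continuous p.
Proof. by case: pb => [[]]. Qed.

Lemma bundle_act_cont_within (T : topologicalType) (A : set T) (a : T -> E)
    (b : T -> G) :
  cont_within A a -> cont_within A b -> cont_within A (fun t => act (a t) (b t)).
Proof.
case: pb => [[_ cact]] _ _ _ _ ca cb.
apply: (cont_within_comp (cont_within_pair ca cb) (B := setT)
  (g := fun zg => act zg.1 zg.2)) => //.
exact: continuous_cont_within.
Qed.

Lemma bundle_division : exists tau : E -> E -> G,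
  cont_within [set zz : E * E | p zz.1 = p zz.2] (fun zz => tau zz.1 zz.2) /\
  forall z z', p z = p z' -> act z (tau z z') = z'.
Proof.
case: pb => _ _ _ [_ [tau [ctau tauK]]] _.
by exists tau; split=> //; exact/cont_withinP.
Qed.

Lemma division_cont_within_comp (tau : E -> E -> G) (T : topologicalType)
    (A : set T) (a b : T -> E) :
  cont_within [set zz : E * E | p zz.1 = p zz.2] (fun zz => tau zz.1 zz.2) ->
  cont_within A a -> cont_within A b -> (forall t, A t -> p (a t) = p (b t)) ->
  cont_within A (fun t => tau (a t) (b t)).
Proof.
move=> ctau ca cb pab.
exact: (cont_within_comp (cont_within_pair ca cb) ctau).
Qed.

Lemma bundle_local_section x : exists U (s : X -> E),
  [/\ open U, U x, cont_within U s & forall y, U y -> p (s y) = y].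
Proof.
case: pb => _ _ _ _ /(_ x) [U [oU Ux [s [cs ps]]]].
by exists U, s; split=> //; exact/cont_withinP.
Qed.

End PrincipalBundle.

Section Representation.
Context {X C E G : topologicalType} (D : pgdata X C) (p : E -> X)
  (act : E -> G -> E) (w : C -> E -> E).
Hypothesis hw : is_representation D p act w.

Lemma rep_cont_within_comp (T : topologicalType) (A : set T) (a : T -> C)
    (b : T -> E) :
  cont_within A a -> cont_within A b -> (forall t, A t -> src D (a t) = p (b t)) ->
  cont_within A (fun t => w (a t) (b t)).
Proof.
case: hw => /cont_withinP cw _ _ _ _ ca cb ab.
exact: (cont_within_comp (cont_within_pair ca cb) cw).
Qed.

Hypothesis hD : is_pregroupoid D.

(* i_x is idempotent and w(\bar i_x) undoes w(i_x), so w(i_x) is the identity. *)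
Lemma rep_unit z : w (unt D (p z)) z = z.
Proof.
case: hD => _ [_ _ sU uC _]; case: hw => _ wP wM wB _.
set u := unt D (p z); have [su tu] := sU (p z).
have uu : cmp D u u = u by have [+ _] := uC u; rewrite tu.
have e1 : w u z = w u (w u z) by rewrite -{1}uu wM // tu.
have e2 : w (bar D u) (w u (w u z)) = w u z by apply: wB; rewrite wP // su tu.
by rewrite -e1 wB in e2.
Qed.

Lemma rep_barK c z : p z = tgt D c -> w c (w (bar D c) z) = z.
Proof.
case: hD => _ [_ _ _ _ [bb sB _]]; case: hw => _ _ _ wB _ pz.
by rewrite -{1}(bb c); apply: wB; rewrite (sB c).1.
Qed.

End Representation.

Section QuotientRelation.
Variables (X Ct : topologicalType) (Dt : pgdata X Ct).

Record bundle_rep := BundleRep {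
  rep_group : topologicalType;
  rep_mul : rep_group -> rep_group -> rep_group;
  rep_one : rep_group;
  rep_inv : rep_group -> rep_group;
  rep_space : topologicalType;
  rep_proj : rep_space -> X;
  rep_act : rep_space -> rep_group -> rep_space;
  rep_map : Ct -> rep_space -> rep_space;
  rep_group_hausdorff : hausdorff_space rep_group;
  rep_topgroup : is_topgroup rep_mul rep_one rep_inv;
  rep_bundle : principal_bundle rep_mul rep_one rep_proj rep_act;
  rep_is_rep : is_representation Dt rep_proj rep_act rep_map }.

Arguments rep_proj : clear implicits.
Arguments rep_act : clear implicits.
Arguments rep_map : clear implicits.

Definition rep_equiv (c d : Ct) : Prop :=
  [/\ src Dt c = src Dt d, tgt Dt c = tgt Dt d &
      forall (r : bundle_rep) z, rep_proj r z = src Dt c ->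
        rep_map r c z = rep_map r d z].

Lemma rep_equiv_sym c d : rep_equiv c d -> rep_equiv d c.
Proof. by case=> s t cd; split=> // r z pz; rewrite cd // pz. Qed.

Lemma rep_equiv_trans c d e : rep_equiv c d -> rep_equiv d e -> rep_equiv c e.
Proof.
case=> s t cd [s' t' de]; split; [by rewrite s|by rewrite t|].
by move=> r z pz; rewrite cd // de // -s.
Qed.

Definition quot := {A : set Ct | exists c, A = rep_equiv c}.

Definition qclass (c : Ct) : quot := exist _ (rep_equiv c) (ex_intro _ c erefl).

Definition qrep (y : quot) : Ct := projT1 (cid (proj2_sig y)).

Lemma qrepK : cancel qrep qclass.
Proof.
rewrite /qrep => -[A HA]; case: cid => c /= e.
by apply: eq_exist; rewrite e.
Qed.

Lemma quot_ind (P : quot -> Prop) : (forall c, P (qclass c)) -> forall y, P y.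
Proof. by move=> Pc y; rewrite -(qrepK y). Qed.

Lemma qclass_eq c d : rep_equiv c d -> qclass c = qclass d.
Proof.
move=> cd; apply: eq_exist; rewrite funeqE => e; apply: propext; split.
  exact/rep_equiv_trans/rep_equiv_sym.
exact: rep_equiv_trans.
Qed.

Lemma qclassP c d : qclass c = qclass d -> rep_equiv c d.
Proof. by move=> /(congr1 sval) /= ->. Qed.

Lemma rep_equiv_qrep c : rep_equiv (qrep (qclass c)) c.
Proof. by apply: qclassP; rewrite qrepK. Qed.

Definition quot_data : pgdata X quot :=
  PGData (fun y => src Dt (qrep y)) (fun y => tgt Dt (qrep y))
    (fun y1 y2 => qclass (cmp Dt (qrep y1) (qrep y2)))
    (fun x => qclass (unt Dt x)) (fun y => qclass (bar Dt (qrep y))).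

Lemma src_qclass c : src quot_data (qclass c) = src Dt c.
Proof. by have [] := rep_equiv_qrep c. Qed.

Lemma tgt_qclass c : tgt quot_data (qclass c) = tgt Dt c.
Proof. by have [] := rep_equiv_qrep c. Qed.

Lemma rep_map_qrep (r : bundle_rep) c z : rep_proj r z = src Dt c ->
  rep_map r (qrep (qclass c)) z = rep_map r c z.
Proof. by have [e _ H] := rep_equiv_qrep c; rewrite -e; apply: H. Qed.

Hypothesis hD : is_pregroupoid Dt.

Lemma rep_equiv_cmp c c' d d' : rep_equiv c c' -> rep_equiv d d' ->
  src Dt c = tgt Dt d -> rep_equiv (cmp Dt c d) (cmp Dt c' d').
Proof.
case: hD => _ [sC _ _ _ _] [sc tc Hc] [sd td Hd] e.
have e' : src Dt c' = tgt Dt d' by rewrite -sc -td.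
have [s1 t1] := sC _ _ e; have [s2 t2] := sC _ _ e'.
split; [by rewrite s1 s2|by rewrite t1 t2|].
move=> r z; rewrite s1 => pz; have [_ wP wM _ _] := rep_is_rep r.
rewrite wM // wM -?sd // Hd // Hc //.
by rewrite wP -?sd // -td.
Qed.

Lemma rep_equiv_bar c c' : rep_equiv c c' -> rep_equiv (bar Dt c) (bar Dt c').
Proof.
case: hD => _ [_ _ _ _ [_ sB _]] [sc tc Hc].
have [s1 t1] := sB c; have [s2 t2] := sB c'.
split; [by rewrite s1 s2|by rewrite t1 t2|].
move=> r z; rewrite s1 => pz; have hw := rep_is_rep r; have [_ wP _ wB _] := hw.
set z' := rep_map r (bar Dt c) z.
have pz' : rep_proj r z' = src Dt c by rewrite wP ?s1 // t1.
have ez : rep_map r c z' = z by apply: (rep_barK hw hD).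
by rewrite -{1}ez Hc // wB // -sc.
Qed.

Lemma rep_equiv_inverse c :
  rep_equiv (cmp Dt c (bar Dt c)) (unt Dt (tgt Dt c)) /\
  rep_equiv (cmp Dt (bar Dt c) c) (unt Dt (src Dt c)).
Proof.
case: hD => _ [sC _ sU _ [_ sB _]].
have [s1 t1] := sB c.
have [s2 t2] := sC _ _ (esym t1); have [s3 t3] := sC _ _ s1.
have [su1 tu1] := sU (tgt Dt c); have [su2 tu2] := sU (src Dt c).
split; split; rewrite ?s2 ?t2 ?su1 ?tu1 ?s3 ?t3 ?su2 ?tu2 ?s1 ?t1 //.
- move=> r z pz; have hw := rep_is_rep r; have [_ _ wM _ _] := hw.
  by rewrite wM ?s1 // (rep_barK hw hD) // -pz (rep_unit hw hD).
- move=> r z pz; have hw := rep_is_rep r; have [_ _ wM wB _] := hw.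
  by rewrite wM // wB // -pz (rep_unit hw hD).
Qed.

Lemma cmp_qclass c d : src Dt c = tgt Dt d ->
  cmp quot_data (qclass c) (qclass d) = qclass (cmp Dt c d).
Proof.
move=> e; apply/qclass_eq/(rep_equiv_cmp (rep_equiv_qrep c) (rep_equiv_qrep d)).
by rewrite -src_qclass -tgt_qclass in e.
Qed.

Lemma bar_qclass c : bar quot_data (qclass c) = qclass (bar Dt c).
Proof. by apply: qclass_eq; apply: rep_equiv_bar; exact: rep_equiv_qrep. Qed.

Lemma unt_qclass x : unt quot_data x = qclass (unt Dt x).
Proof. by []. Qed.

Lemma quot_pregroupoid_laws : pregroupoid_laws quot_data.
Proof.
case: hD => _ [sC aC sU uC [bb sB bC]].
have qE := (src_qclass, tgt_qclass, unt_qclass).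
split; [| | by move=> x; rewrite !qE; exact: sU | | split].
- move=> y1 y2; elim/quot_ind: y1 => c1; elim/quot_ind: y2 => c2.
  by move=> e; rewrite !qE in e; rewrite (cmp_qclass e) !qE; exact: sC.
- move=> y1 y2 y3; elim/quot_ind: y1 => c1; elim/quot_ind: y2 => c2.
  elim/quot_ind: y3 => c3; rewrite !qE => e1 e2.
  have e12 : src Dt (cmp Dt c1 c2) = tgt Dt c3 by rewrite (sC _ _ e1).1.
  have e23 : src Dt c1 = tgt Dt (cmp Dt c2 c3) by rewrite (sC _ _ e2).2.
  by rewrite (cmp_qclass e1) (cmp_qclass e2) (cmp_qclass e12) (cmp_qclass e23) aC.
- move=> y; elim/quot_ind: y => c; rewrite !qE.
  rewrite (cmp_qclass (sU (tgt Dt c)).1) (cmp_qclass (esym (sU (src Dt c)).2)).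
  by have [-> ->] := uC c.
- by move=> y; elim/quot_ind: y => c; rewrite !bar_qclass bb.
- by move=> y; elim/quot_ind: y => c; rewrite bar_qclass !qE; exact: sB.
- move=> y1 y2; elim/quot_ind: y1 => c1; elim/quot_ind: y2 => c2.
  rewrite !qE => e; have e' : src Dt (bar Dt c2) = tgt Dt (bar Dt c1).
    by rewrite (sB c2).1 (sB c1).2.
  by rewrite (cmp_qclass e) !bar_qclass (cmp_qclass e') bC.
Qed.

Lemma quot_inverse_laws : inverse_laws quot_data.
Proof.
case: hD => _ [_ _ _ _ [_ sB _]] y; elim/quot_ind: y => c.
rewrite bar_qclass !(src_qclass, tgt_qclass, unt_qclass).
rewrite (cmp_qclass (esym (sB c).2)) (cmp_qclass (sB c).1).
by have [e1 e2] := rep_equiv_inverse c; split; apply: qclass_eq.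
Qed.

End QuotientRelation.

Arguments rep_proj {X Ct Dt} _.
Arguments rep_act {X Ct Dt} _.
Arguments rep_map {X Ct Dt} _.
Arguments rep_group_hausdorff {X Ct Dt} _.

Section QuotientSubbase.
Variables (X Ct : topologicalType) (Dt : pgdata X Ct).
Local Notation Q := (quot_data Dt).

Definition eval_at_section (r : bundle_rep Dt) (s : X -> rep_space r)
    (y : quot Dt) : rep_space r :=
  rep_map r (qrep y) (s (src Q y)).

Definition quot_subbase : set_system (quot Dt) := fun B =>
  (exists2 O : set X, open O & B = src Q @^-1` O) \/
  (exists2 O : set X, open O & B = tgt Q @^-1` O) \/
  exists (r : bundle_rep Dt) (U : set X) (s : X -> rep_space r)
         (O : set (rep_space r)),
    [/\ open U, cont_within U s, (forall x, U x -> rep_proj r (s x) = x), open O &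
        B = [set y | U (src Q y) /\ O (eval_at_section s y)]].

End QuotientSubbase.

Arguments quot_subbase {X Ct} Dt _.

HB.instance Definition _ (X Ct : topologicalType) (Dt : pgdata X Ct) :=
  gen_eqMixin (quot Dt).
HB.instance Definition _ (X Ct : topologicalType) (Dt : pgdata X Ct) :=
  gen_choiceMixin (quot Dt).
HB.instance Definition _ (X Ct : topologicalType) (Dt : pgdata X Ct) :=
  @isOpenTopological.Build (quot Dt) (generated_open (quot_subbase Dt))
    (@generated_openT _ _) (@generated_openI _ _) (@generated_open_bigU _ _).

Section QuotientTopology.
Variables (X Ct : topologicalType) (Dt : pgdata X Ct).
Local Notation Q := (quot_data Dt).

Lemma quot_subbase_open (B : set (quot Dt)) : quot_subbase Dt B -> open B.
Proof. exact: generated_open_subbase. Qed.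

Lemma cont_within_to_quot (T : topologicalType) (A : set T) (g : T -> quot Dt) :
  (forall B, quot_subbase Dt B -> forall x, A x -> B (g x) ->
     exists U, [/\ open U, U x & forall y, U y -> A y -> B (g y)]) ->
  cont_within A g.
Proof.
(* The sets satisfying the neighbourhood condition form a topology containing
   the subbase. *)
move=> Hsub x Ax V oV; move: x Ax; apply: (oV (fun V => forall x, A x -> V (g x) ->
  exists U, [/\ open U, U x & forall y, U y -> A y -> V (g y)])).
- by move=> x _ _; exists setT; split=> //; exact: openT.
- move=> V1 V2 H1 H2 x Ax [V1x V2x].
  have [U1 [oU1 U1x sU1]] := H1 x Ax V1x; have [U2 [oU2 U2x sU2]] := H2 x Ax V2x.
  exists (U1 `&` U2); split=> //; first exact: openI.
  by move=> y [U1y U2y] Ay; split; [exact: sU1|exact: sU2].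
- move=> VV sVV x Ax [W VVW Wx]; have [U [oU Ux sU]] := sVV W VVW x Ax Wx.
  by exists U; split=> // y Uy Ay; exists W => //; exact: sU.
- by move=> B /Hsub.
Qed.

Lemma quot_src_cont_within (T : topologicalType) (A : set T) (g : T -> quot Dt) :
  cont_within A g -> cont_within A (fun t => src Q (g t)).
Proof.
move=> cg; apply: (cont_within_comp cg (B := setT)) => //.
apply/continuous_cont_within/continuousP => O oO.
by apply: quot_subbase_open; left; exists O.
Qed.

Lemma quot_tgt_cont_within (T : topologicalType) (A : set T) (g : T -> quot Dt) :
  cont_within A g -> cont_within A (fun t => tgt Q (g t)).
Proof.
move=> cg; apply: (cont_within_comp cg (B := setT)) => //.
apply/continuous_cont_within/continuousP => O oO.
by apply: quot_subbase_open; right; left; exists O.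
Qed.

Section EvalAtSection.
Variables (r : bundle_rep Dt) (U : set X) (s : X -> rep_space r).
Hypotheses (oU : open U) (cs : cont_within U s)
  (sK : forall x, U x -> rep_proj r (s x) = x).

Lemma eval_at_section_cont_within :
  cont_within [set y | U (src Q y)] (eval_at_section s).
Proof.
move=> y Uy V oV Vy; exists [set y | U (src Q y) /\ V (eval_at_section s y)].
split=> //; last by move=> y' [].
by apply: quot_subbase_open; right; right; exists r, U, s, V.
Qed.

Lemma eval_at_section_qclass c : U (src Dt c) ->
  eval_at_section s (qclass Dt c) = rep_map r c (s (src Dt c)).
Proof.
by move=> Uc; rewrite /eval_at_section src_qclass rep_map_qrep // sK.
Qed.

End EvalAtSection.

Lemma cont_within_quot (T : topologicalType) (A : set T) (g : T -> quot Dt) :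
  cont_within A (fun t => src Q (g t)) -> cont_within A (fun t => tgt Q (g t)) ->
  (forall (r : bundle_rep Dt) (U : set X) (s : X -> rep_space r),
     open U -> cont_within U s -> (forall x, U x -> rep_proj r (s x) = x) ->
     cont_within [set t | A t /\ U (src Q (g t))] (fun t => eval_at_section s (g t))) ->
  cont_within A g.
Proof.
move=> cs ct ce; apply: cont_within_to_quot => B [[W oW ->] | [[W oW ->] | ]].
- by move=> x Ax; exact: cs.
- by move=> x Ax; exact: ct.
move=> [r [U [s [W [oU cs' sK oW ->]]]]] x Ax [Ux Wx].
have [W1 [oW1 W1x H1]] := cs x Ax U oU Ux.
have [W2 [oW2 W2x H2]] := ce r U s oU cs' sK x (conj Ax Ux) W oW Wx.
exists (W1 `&` W2); split=> //; first exact: openI.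
by move=> y [W1y W2y] Ay; have Uy := H1 y W1y Ay; split=> //; exact: H2.
Qed.

Definition quot_rep (r : bundle_rep Dt) (y : quot Dt) (z : rep_space r) :=
  rep_map r (qrep y) z.

(* Locally the descended action is [y, z |-> eval_at_section s y * tau (s (p z)) z]
   for a local section [s] and the division map [tau] of the bundle. *)
Lemma quot_rep_cont_within (r : bundle_rep Dt) :
  cont_within [set yz : quot Dt * rep_space r | src Q yz.1 = rep_proj r yz.2]
    (fun yz => quot_rep yz.1 yz.2).
Proof.
have pb := rep_bundle r; have [_ _ _ _ wE] := rep_is_rep r.
have [tau [ctau tauK]] := bundle_division pb.
apply: cont_within_local => -[y0 z0] /= _.
have [U [s [oU Uz cs sK]]] := bundle_local_section pb (rep_proj r z0).
have pU : open (rep_proj r @^-1` U).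
  by move/continuousP: (bundle_proj_continuous pb); apply.
exists (setT `*` (rep_proj r @^-1` U)); split=> //.
  by apply: open_setX => //; exact: openT.
apply: (cont_within_ext (f := fun yz : quot Dt * rep_space r =>
   rep_act r (eval_at_section s yz.1) (tau (s (rep_proj r yz.2)) yz.2))).
  move=> [y z] /= [e [_ Uz']]; rewrite /eval_at_section /quot_rep /= e -wE.
    by rewrite tauK // sK.
  by rewrite sK.
apply: (bundle_act_cont_within pb).
- apply: (cont_within_comp (f := fst) (g := eval_at_section s)
    (B := [set y | U (src Q y)])) => [||[y z] /= [e [_ Uz']]].
  + exact: cont_within_fst.
  + exact: eval_at_section_cont_within.
  + by rewrite /= e.
- apply: (division_cont_within_comp ctau).
  + apply: (cont_within_comp (B := U) (g := s)) => //; last by move=> [y z] [_ []].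
    apply: (cont_within_comp (f := snd) (B := setT)) => //.
      exact: cont_within_snd.
    exact/continuous_cont_within/(bundle_proj_continuous pb).
  + exact: cont_within_snd.
  + by move=> [y z] /= [_ [_ Uz']]; rewrite sK.
Qed.

End QuotientTopology.

Section QuotientGroupoid.
Variables (X Ct : topologicalType) (Dt : pgdata X Ct).
Hypothesis hD : is_pregroupoid Dt.
Local Notation Q := (quot_data Dt).

Lemma qclass_continuous : continuous (qclass Dt).
Proof.
have [[cS cT _ _ _] _] := hD.
apply: cont_within_setT; apply: cont_within_quot.
- apply: (cont_within_ext (f := src Dt)); last exact: continuous_cont_within.
  by move=> c _; exact/esym/src_qclass.
- apply: (cont_within_ext (f := tgt Dt)); last exact: continuous_cont_within.
  by move=> c _; exact/esym/tgt_qclass.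
move=> r U s oU cs sK.
have Uc c : [set t | setT t /\ U (src Q (qclass Dt t))] c -> U (src Dt c).
  by move=> [_]; rewrite src_qclass.
apply: (cont_within_ext (f := fun c => rep_map r c (s (src Dt c)))).
  by move=> c /Uc Uc'; exact/esym/(eval_at_section_qclass sK).
apply: (rep_cont_within_comp (rep_is_rep r)).
- exact: cont_within_id.
- apply: (cont_within_comp (f := src Dt) (g := s) (B := U)) => //.
  exact: continuous_cont_within.
- by move=> c /Uc Uc'; rewrite sK.
Qed.

Lemma quot_cmp_cont_within :
  cont_within [set yy : quot Dt * quot Dt | src Q yy.1 = tgt Q yy.2]
    (fun yy => cmp Q yy.1 yy.2).
Proof.
have [sC _ _ _ _] := quot_pregroupoid_laws hD.
apply: cont_within_quot.
- apply: (cont_within_ext (f := fun yy : quot Dt * quot Dt => src Q yy.2)).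
    by move=> [y1 y2] /sC [+ _]; exact: esym.
  exact/quot_src_cont_within/cont_within_snd.
- apply: (cont_within_ext (f := fun yy : quot Dt * quot Dt => tgt Q yy.1)).
    by move=> [y1 y2] /sC [_]; exact: esym.
  exact/quot_tgt_cont_within/cont_within_fst.
move=> r U s oU cs sK; have [_ wP wM _ _] := rep_is_rep r.
have [_ [sCt _ _ _ _]] := hD.
apply: (cont_within_ext (f := fun yy => quot_rep yy.1 (eval_at_section s yy.2))).
  move=> [y1 y2] [e]; have [s12 _] := sC _ _ e; rewrite s12 => Uy2.
  rewrite /eval_at_section /quot_rep s12 rep_map_qrep.
    by rewrite wM // sK.
  by rewrite sK // (sCt _ _ e).1.
apply: (cont_within_comp _ (quot_rep_cont_within (r := r))
  (f := fun yy : quot Dt * quot Dt => (yy.1, eval_at_section s yy.2))).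
- apply: cont_within_pair; first exact: cont_within_fst.
  apply: (cont_within_comp (f := snd) (B := [set y | U (src Q y)])).
  + exact: cont_within_snd.
  + exact: eval_at_section_cont_within.
  + by move=> [y1 y2] [e]; rewrite (sC _ _ e).1.
- by move=> [y1 y2] [e]; rewrite (sC _ _ e).1 => Uy2; rewrite /= wP // sK.
Qed.

Lemma quot_bar_continuous : continuous (bar Q).
Proof.
have [_ _ _ _ [_ sB _]] := quot_pregroupoid_laws hD.
apply: cont_within_setT; apply: cont_within_quot.
- apply: (cont_within_ext (f := tgt Q)); first by move=> y _; exact/esym/(sB y).1.
  exact/quot_tgt_cont_within/cont_within_id.
- apply: (cont_within_ext (f := src Q)); first by move=> y _; exact/esym/(sB y).2.
  exact/quot_src_cont_within/cont_within_id.
have [_ [_ _ _ _ [_ sBt _]]] := hD.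
move=> r U s oU cs sK; have pb := rep_bundle r.
have hw := rep_is_rep r; have [_ wP _ wB wE] := hw.
have [tau [ctau tauK]] := bundle_division pb.
apply: cont_within_local => y0 _.
have [U' [s' [oU' U'y0 cs' sK']]] := bundle_local_section pb (src Q y0).
exists [set y | U' (src Q y)]; split=> //.
  by apply: quot_subbase_open; left; exists U'.
(* Write [s (tgt y)] as [eval_at_section s' y * g]; then [\bar y] sends it to
   [s' (src y) * g]. *)
apply: (cont_within_ext (f := fun y => rep_act r (s' (src Q y))
                           (tau (eval_at_section s' y) (s (tgt Q y))))).
  move=> y [[_]]; rewrite (sB y).1 => Uy U'y.
  have pa : rep_proj r (eval_at_section s' y) = tgt Q y by rewrite wP // sK'.
  rewrite [RHS]/eval_at_section (sB y).1 rep_map_qrep; last by rewrite sK // (sBt _).1.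
  rewrite -{2}(tauK (eval_at_section s' y) (s (tgt Q y))); last by rewrite pa sK.
  rewrite wE; last by rewrite (sBt _).1 pa.
  by rewrite /eval_at_section wB // sK'.
apply: (bundle_act_cont_within pb).
- apply: (cont_within_comp (f := src Q) (g := s') (B := U')) => //.
    exact/quot_src_cont_within/cont_within_id.
  by move=> y [].
- apply: (division_cont_within_comp ctau).
  + apply: (cont_within_subset (A := [set y | U' (src Q y)])); first by move=> y [].
    exact: eval_at_section_cont_within.
  + apply: (cont_within_comp (f := tgt Q) (g := s) (B := U)) => //.
      exact/quot_tgt_cont_within/cont_within_id.
    by move=> y [[_]]; rewrite (sB y).1.
  + by move=> y [[_]]; rewrite (sB y).1 => Uy U'y; rewrite wP ?sK // sK'.
Qed.

Lemma quot_unt_continuous : continuous (unt Q).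
Proof.
have [_ _ sU _ _] := quot_pregroupoid_laws hD.
have [_ [_ _ sUt _ _]] := hD.
apply: cont_within_setT; apply: cont_within_quot.
- apply: (cont_within_ext (f := id)); last exact: cont_within_id.
  by move=> x _; exact/esym/(sU x).1.
- apply: (cont_within_ext (f := id)); last exact: cont_within_id.
  by move=> x _; exact/esym/(sU x).2.
move=> r U s oU cs sK; apply: (cont_within_ext (f := s)).
  move=> x [_]; rewrite (sU x).1 => Ux.
  rewrite /eval_at_section (sU x).1 rep_map_qrep; last by rewrite sK // (sUt x).1.
  by have := rep_unit (rep_is_rep r) hD (s x); rewrite sK // => ->.
by apply: (cont_within_subset (A := U)) => // x [_]; rewrite (sU x).1.
Qed.

End QuotientGroupoid.

Section QuotientExistence.
Variables (X Ct : topologicalType) (Dt : pgdata X Ct).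
Hypothesis hD : is_pregroupoid Dt.
Local Notation Q := (quot_data Dt).

Lemma quot_hausdorff : hausdorff_space X -> hausdorff_space (quot Dt).
Proof.
move=> hX; apply/hausdorffP => y1 y2 ne.
have [es|ns] := pselect (src Q y1 = src Q y2); last first.
  exact: (separate_by_cont_within hX openT (quot_src_cont_within cont_within_id)).
have [et|nt] := pselect (tgt Q y1 = tgt Q y2); last first.
  exact: (separate_by_cont_within hX openT (quot_tgt_cont_within cont_within_id)).
have [r [z [pz nwz]]] : exists (r : bundle_rep Dt) (z : rep_space r),
    rep_proj r z = src Q y1 /\
    rep_map r (qrep y1) z <> rep_map r (qrep y2) z.
  apply: contrapT => nex; apply: ne; rewrite -(qrepK y1) -(qrepK y2).
  apply: qclass_eq; split=> // r z pz; apply: contrapT => nw.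
  by apply: nex; exists r, z.
have pb := rep_bundle r; have [_ wP _ _ wE] := rep_is_rep r.
have [tau [ctau tauK]] := bundle_division pb.
have [U [s [oU Uy1 cs sK]]] := bundle_local_section pb (src Q y1).
have [U2 [s2 [oU2 U2y1 cs2 sK2]]] := bundle_local_section pb (tgt Q y1).
pose dom := [set y | U (src Q y)] `&` [set y | U2 (tgt Q y)].
pose phi y := tau (s2 (tgt Q y)) (eval_at_section s y).
have phiK y : dom y -> eval_at_section s y = rep_act r (s2 (tgt Q y)) (phi y).
  by move=> [Uy U2y]; rewrite /phi tauK // sK2 // wP // sK.
(* Relative to the frames s and s2, [phi y] is the group element by which y acts. *)
have act_phi y : src Q y = src Q y1 -> dom y -> rep_map r (qrep y) z =
    rep_act r (rep_act r (s2 (tgt Q y)) (phi y)) (tau (s (src Q y1)) z).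
  move=> ey Dy; rewrite -phiK // /eval_at_section ey -wE; last by rewrite sK.
  by rewrite tauK // sK.
have Dy1 : dom y1 by [].
have Dy2 : dom y2.
  by split; [change (U (src Q y2)); rewrite -es|change (U2 (tgt Q y2)); rewrite -et].
apply: (separate_by_cont_within (rep_group_hausdorff r) (A := dom) (f := phi)) => //.
- by apply: openI; apply: quot_subbase_open; [left; exists U|right; left; exists U2].
- apply: (division_cont_within_comp ctau).
  + apply: (cont_within_comp (f := tgt Q) (g := s2) (B := U2)) => //.
      exact/quot_tgt_cont_within/cont_within_id.
    by move=> y [].
  + apply: (cont_within_subset (A := [set y | U (src Q y)])); first by move=> y [].
    exact: eval_at_section_cont_within.
  + by move=> y [Uy U2y]; rewrite sK2 // wP // sK.
- move=> phi12; apply: nwz.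
  by rewrite (act_phi y1) // (act_phi y2) ?es // et phi12.
Qed.

Lemma quot_groupoid : is_groupoid Q.
Proof.
split; last exact: quot_inverse_laws.
split; last exact: quot_pregroupoid_laws.
split.
- exact/cont_within_setT/quot_src_cont_within/cont_within_id.
- exact/cont_within_setT/quot_tgt_cont_within/cont_within_id.
- exact/cont_withinP/quot_cmp_cont_within.
- exact: quot_unt_continuous.
- exact: quot_bar_continuous.
Qed.

Lemma quot_locally_trivial x0 :
  locally_trivial_numerable x0 Dt -> locally_trivial_numerable x0 Q.
Proof.
apply: numerable_subordinate_mono => U [oU [rho [crho rhoP]]].
split=> //; exists (fun x => qclass Dt (rho x)); split.
  apply/cont_withinP; apply: (cont_within_comp (B := setT)) => //.
    exact/cont_withinP.
  exact/continuous_cont_within/qclass_continuous.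
by move=> x Ux; rewrite src_qclass tgt_qclass; exact: rhoP.
Qed.

Lemma qclass_morphism : is_morphism Dt Q (qclass Dt).
Proof.
split=> [c|c d e|//|c].
- by rewrite src_qclass tgt_qclass.
- by rewrite cmp_qclass.
- by rewrite bar_qclass.
Qed.

Lemma quot_rep_is_rep (r : bundle_rep Dt) :
  is_representation Q (rep_proj r) (rep_act r) (quot_rep (r := r)).
Proof.
have [_ [sC _ _ _ [_ sB _]]] := hD; have [_ wP wM wB wE] := rep_is_rep r.
split.
- exact/cont_withinP/quot_rep_cont_within.
- by move=> y z e; apply: wP.
- move=> y1 y2 z e1 e2; rewrite /quot_rep rep_map_qrep ?wM //.
  by rewrite (sC _ _ e1).1.
- move=> y z e; rewrite /quot_rep rep_map_qrep ?wB //.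
  by rewrite wP // (sB _).1.
- by move=> y z g e; apply: wE.
Qed.

Lemma quot_reps_factor : reps_factor Dt Q (qclass Dt).
Proof.
move=> G mul one inv hG tg E p act pb wt hw.
pose r := BundleRep hG tg pb hw.
exists (quot_rep (r := r)); split.
- exact: (quot_rep_is_rep r).
- by move=> c z e; rewrite /quot_rep rep_map_qrep.
- by move=> w' _ ind y z e; rewrite -[in LHS](qrepK y) -ind.
Qed.

Lemma quot_good_quotient x0 : hausdorff_space X ->
  locally_trivial_numerable x0 Dt -> good_quotient x0 Dt Q (qclass Dt).
Proof.
move=> hX hL; split.
- by split; [exact: quot_hausdorff|exact: quot_groupoid].
- exact: quot_locally_trivial.
- by split; [exact: qclass_continuous|move=> y; exists (qrep y); exact: qrepK].
- exact: qclass_morphism.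
- exact: quot_reps_factor.
Qed.

End QuotientExistence.

Section VertexBundle.
Variables (X C : topologicalType) (x0 : X) (D : pgdata X C).
Hypothesis gD : is_groupoid D.

Let hD : is_pregroupoid D := gD.1.
Let laws : pregroupoid_laws D := hD.2.
Let iv : inverse_laws D := gD.2.

Definition vertex_group : set C := [set g | src D g = x0 /\ tgt D g = x0].

Definition arrows_from : set C := [set z | src D z = x0].

Local Notation E := (set_type arrows_from).
Local Notation G := (set_type vertex_group).

Lemma vertex_group_unt : vertex_group (unt D x0).
Proof. by have [_ _ sU _ _] := laws; exact: sU. Qed.

Lemma arrows_from_unt : arrows_from (unt D x0).
Proof. exact: vertex_group_unt.1. Qed.

Definition vertex_one : G := exist _ (unt D x0) (mem_set vertex_group_unt).

(* [insubd u0 c] is [c] when [c] lies in the subset and the dummy [u0]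
   otherwise; the [val_*] lemmas below show that the dummies are never used. *)
Definition vertex_mul (a b : G) : G := insubd a (cmp D (val a) (val b)).

Definition vertex_inv (a : G) : G := insubd a (bar D (val a)).

Definition arrows_tgt (z : E) : X := tgt D (val z).

Definition arrows_act (z : E) (g : G) : E := insubd z (cmp D (val z) (val g)).

Definition arrows_div (z z' : E) : G :=
  insubd vertex_one (cmp D (bar D (val z)) (val z')).

Definition arrows_translate (a : C) (z : E) : E := insubd z (cmp D a (val z)).

Lemma val_vertex_mul a b : val (vertex_mul a b) = cmp D (val a) (val b).
Proof.
have [sC _ _ _ _] := laws; have [sa ta] := set_valP a; have [sb tb] := set_valP b.
have e : src D (val a) = tgt D (val b) by rewrite sa tb.
by apply: val_insubd_set; split; [rewrite (sC _ _ e).1|rewrite (sC _ _ e).2].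
Qed.

Lemma val_vertex_inv a : val (vertex_inv a) = bar D (val a).
Proof.
have [_ _ _ _ [_ sB _]] := laws; have [sa ta] := set_valP a.
by apply: val_insubd_set; split; [rewrite (sB _).1|rewrite (sB _).2].
Qed.

Lemma val_arrows_act z g : val (arrows_act z g) = cmp D (val z) (val g).
Proof.
have [sC _ _ _ _] := laws; have sz := set_valP z; have [sg tg] := set_valP g.
have e : src D (val z) = tgt D (val g) by rewrite sz tg.
by apply: val_insubd_set; rewrite /arrows_from /= (sC _ _ e).1.
Qed.

Lemma val_arrows_div z z' : arrows_tgt z = arrows_tgt z' ->
  val (arrows_div z z') = cmp D (bar D (val z)) (val z').
Proof.
have [sC _ _ _ [_ sB _]] := laws; have sz := set_valP z; have sz' := set_valP z'.
move=> e; have e' : src D (bar D (val z)) = tgt D (val z') by rewrite (sB _).1.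
by apply: val_insubd_set; split; [rewrite (sC _ _ e').1|rewrite (sC _ _ e').2 (sB _).2].
Qed.

Lemma val_arrows_translate a z : src D a = arrows_tgt z ->
  val (arrows_translate a z) = cmp D a (val z).
Proof.
have [sC _ _ _ _] := laws; have sz := set_valP z.
by move=> e; apply: val_insubd_set; rewrite /arrows_from /= (sC _ _ e).1.
Qed.

Lemma arrows_tgt_translate a z : src D a = arrows_tgt z ->
  arrows_tgt (arrows_translate a z) = tgt D a.
Proof.
have [sC _ _ _ _] := laws.
by move=> e; rewrite /arrows_tgt val_arrows_translate // (sC _ _ e).2.
Qed.

Lemma vertex_topgroup : is_topgroup vertex_mul vertex_one vertex_inv.
Proof.
have [_ aC _ uC _] := laws.
split=> [a b c|a|a||].
- apply: val_inj; rewrite !val_vertex_mul aC //.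
    by rewrite (set_valP a).1 (set_valP b).2.
  by rewrite (set_valP b).1 (set_valP c).2.
- have [sa ta] := set_valP a; split; apply: val_inj; rewrite val_vertex_mul /=.
    by rewrite -ta (uC _).1.
  by rewrite -sa (uC _).2.
- have [sa ta] := set_valP a.
  split; apply: val_inj; rewrite val_vertex_mul val_vertex_inv /=.
    by rewrite (iv _).2 sa.
  by rewrite (iv _).1 ta.
- apply/cont_within_setT/cont_within_to_set_type.
  apply: (cont_within_ext (f := fun ab : G * G => cmp D (val ab.1) (val ab.2))).
    by move=> ab _; rewrite val_vertex_mul.
  apply: (cmp_cont_within hD).
  + by apply: (cont_within_val (h := fst)); exact: cont_within_fst.
  + by apply: (cont_within_val (h := snd)); exact: cont_within_snd.
  + by move=> [a b] _ /=; rewrite (set_valP a).1 (set_valP b).2.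
- apply/cont_within_setT/cont_within_to_set_type.
  apply: (cont_within_ext (f := fun a : G => bar D (val a))).
    by move=> a _; rewrite val_vertex_inv.
  by apply/(bar_cont_within hD)/cont_within_val; exact: cont_within_id.
Qed.

Definition arrows_section (rho : X -> C) (y : X) : E :=
  insubd (exist _ (unt D x0) (mem_set arrows_from_unt)) (bar D (rho y)).

Section ArrowsSection.
Variables (U : set X) (rho : X -> C).
Hypothesis rhoP : forall y, U y -> src D (rho y) = y /\ tgt D (rho y) = x0.

Lemma val_arrows_section y : U y -> val (arrows_section rho y) = bar D (rho y).
Proof.
have [_ _ _ _ [_ sB _]] := laws.
by move=> Uy; apply: val_insubd_set; rewrite /arrows_from /= (sB _).1 (rhoP Uy).2.
Qed.

Lemma arrows_tgt_section y : U y -> arrows_tgt (arrows_section rho y) = y.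
Proof.
have [_ _ _ _ [_ sB _]] := laws.
by move=> Uy; rewrite /arrows_tgt val_arrows_section // (sB _).2 (rhoP Uy).1.
Qed.

Lemma arrows_section_cont_within :
  cont_within U rho -> cont_within U (arrows_section rho).
Proof.
move=> crho; apply: cont_within_to_set_type.
apply: (cont_within_ext (f := fun y => bar D (rho y))).
  by move=> y Uy; rewrite val_arrows_section.
exact: bar_cont_within.
Qed.

End ArrowsSection.

Lemma arrows_tgt_act z g : arrows_tgt (arrows_act z g) = arrows_tgt z.
Proof.
have [sC _ _ _ _] := laws; have e : src D (val z) = tgt D (val g).
  by rewrite (set_valP z) (set_valP g).2.
by rewrite /arrows_tgt val_arrows_act (sC _ _ e).2.
Qed.

Lemma arrows_tgt_surjective : locally_trivial_numerable x0 D ->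
  forall x, exists z : E, arrows_tgt z = x.
Proof.
move=> lt x; have [U [[_ [rho [_ rhoP]]] Ux]] := numerable_subordinate_cover lt x.
by exists (arrows_section rho x); exact: (arrows_tgt_section rhoP Ux).
Qed.

Lemma arrows_principal_bundle : locally_trivial_numerable x0 D ->
  principal_bundle vertex_mul vertex_one arrows_tgt arrows_act.
Proof.
move=> lt; have [sC aC sU uC [_ sB _]] := laws.
split.
- split; apply/cont_within_setT.
    rewrite /arrows_tgt.
    apply: (cont_within_comp (f := fun z : E => val z) (g := tgt D) (B := setT)) => //.
      exact/cont_within_val/cont_within_id.
    by apply: continuous_cont_within; have [[]] := hD.
  apply: cont_within_to_set_type.
  apply: (cont_within_ext (f := fun zg : E * G => cmp D (val zg.1) (val zg.2))).
    by move=> zg _; rewrite val_arrows_act.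
  apply: (cmp_cont_within hD).
  + by apply: (cont_within_val (h := fst)); exact: cont_within_fst.
  + by apply: (cont_within_val (h := snd)); exact: cont_within_snd.
  + by move=> [z g] _ /=; rewrite (set_valP z) (set_valP g).2.
- split=> [z|z g h]; apply: val_inj; rewrite !val_arrows_act.
    by rewrite -[RHS](uC (val z)).2 (set_valP z).
  rewrite val_vertex_mul aC //; first by rewrite (set_valP z) (set_valP g).2.
  by rewrite (set_valP g).1 (set_valP h).2.
- exact: arrows_tgt_act.
- have act_div z z' :
      arrows_tgt z = arrows_tgt z' -> arrows_act z (arrows_div z z') = z'.
    move=> e; have e' : tgt D (val z) = tgt D (val z') := e.
    apply: val_inj; rewrite val_arrows_act val_arrows_div // -aC.
    + by rewrite (iv _).1 e' (uC _).1.
    + by rewrite (sB _).2.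
    + by rewrite (sB _).1.
  split.
    move=> z z' e; exists (arrows_div z z'); split=> [|g <-]; first exact: act_div.
    apply: val_inj; rewrite val_arrows_div ?arrows_tgt_act // val_arrows_act -aC.
    + by rewrite (iv _).2 (set_valP z) -{1}(set_valP g).2 (uC _).1.
    + by rewrite (sB _).1.
    + by rewrite (set_valP z) (set_valP g).2.
  exists arrows_div; split; last exact: act_div.
  apply/cont_withinP/cont_within_to_set_type.
  apply: (cont_within_ext (f := fun zz : E * E => cmp D (bar D (val zz.1)) (val zz.2))).
    by move=> zz e; rewrite val_arrows_div.
  apply: (cmp_cont_within hD).
  + apply: (bar_cont_within hD); apply: (cont_within_val (h := fst)).
    exact: cont_within_fst.
  + by apply: (cont_within_val (h := snd)); exact: cont_within_snd.
  + by move=> [z z'] /= e; rewrite (sB _).1.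
- move=> x; have [U [[oU [rho [crho rhoP]]] Ux]] := numerable_subordinate_cover lt x.
  exists U; split=> //; exists (arrows_section rho); split.
    by apply/cont_withinP/arrows_section_cont_within => //; exact/cont_withinP.
  exact: arrows_tgt_section.
Qed.

Lemma arrows_translate_rep (Ct : topologicalType) (Dt : pgdata X Ct) (f' : Ct -> C) :
  continuous f' -> is_morphism Dt D f' ->
  is_representation Dt arrows_tgt arrows_act
    (fun c => arrows_translate (f' c)).
Proof.
move=> cf' [mfs mfc _ mfb]; have [sC aC sU uC [_ sB _]] := laws.
have src_f c z : src Dt c = arrows_tgt z -> src D (f' c) = arrows_tgt z.
  by rewrite (mfs c).1.
split.
- apply/cont_withinP/cont_within_to_set_type.
  apply: (cont_within_ext (f := fun cz : Ct * E => cmp D (f' cz.1) (val cz.2))).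
    by move=> [c z] /= /src_f e; rewrite val_arrows_translate.
  apply: (cmp_cont_within hD).
  + apply: (cont_within_comp (f := fst) (B := setT)) => //.
      exact: cont_within_fst.
    exact: continuous_cont_within.
  + by apply: (cont_within_val (h := snd)); exact: cont_within_snd.
  + by move=> [c z] /= /src_f.
- by move=> c z /src_f e; rewrite arrows_tgt_translate // (mfs c).2.
- move=> c d z e1 /src_f e2.
  have e12 : src D (f' c) = tgt D (f' d) by rewrite (mfs c).1 (mfs d).2.
  have e3 : src D (cmp D (f' c) (f' d)) = arrows_tgt z by rewrite (sC _ _ e12).1.
  have e4 : src D (f' c) = arrows_tgt (arrows_translate (f' d) z).
    by rewrite arrows_tgt_translate.
  apply: val_inj; rewrite mfc // (val_arrows_translate e3) (val_arrows_translate e4).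
  by rewrite (val_arrows_translate e2) aC.
- move=> c z /src_f e.
  have e4 : src D (f' (bar Dt c)) = arrows_tgt (arrows_translate (f' c) z).
    by rewrite mfb (sB _).1 arrows_tgt_translate.
  apply: val_inj; rewrite (val_arrows_translate e4) (val_arrows_translate e) mfb -aC.
  + by rewrite (iv _).2 e (uC _).1.
  + by rewrite (sB _).1.
  + exact: e.
- move=> c z g /src_f e.
  have e5 : src D (f' c) = arrows_tgt (arrows_act z g) by rewrite arrows_tgt_act.
  apply: val_inj; rewrite (val_arrows_translate e5) !val_arrows_act.
  rewrite (val_arrows_translate e) aC //.
  by rewrite (set_valP z) (set_valP g).2.
Qed.

End VertexBundle.

Arguments arrows_tgt {X C x0 D} z.
Arguments arrows_act {X C x0 D} z g.
Arguments vertex_mul {X C x0 D} a b.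
Arguments vertex_inv {X C x0 D} a.

Section FactorMap.
Variables (X Ct C C' : topologicalType) (x0 : X) (Dt : pgdata X Ct).
Variables (D : pgdata X C) (D' : pgdata X C') (f : Ct -> C) (f' : Ct -> C').
Hypotheses (gq : good_quotient x0 Dt D f) (gq' : good_quotient x0 Dt D' f').

Let gD : is_groupoid D. Proof. by case: gq => -[]. Qed.
Let gD' : is_groupoid D'. Proof. by case: gq' => -[]. Qed.
Let lt' : locally_trivial_numerable x0 D'. Proof. by case: gq'. Qed.
Local Notation E := (set_type (arrows_from x0 D')).

Lemma good_quotient_surjective y : exists c, f c = y.
Proof. by case: gq => _ _ [_ /(_ y)]. Qed.

Lemma factor_translation_rep : exists w : C -> E -> E,
  is_representation D arrows_tgt arrows_act w /\
  forall c z, src Dt c = arrows_tgt z -> val (w (f c) z) = cmp D' (f' c) (val z).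
Proof.
have [_ _ _ _ rf] := gq; have [_ _ [cf' _] mf' _] := gq'.
have [[/set_type_hausdorff hG _] _ _ _ _] := gq'.
have [w [hw ind _]] := rf _ _ _ _ (hG _) (vertex_topgroup x0 gD') _ _ _
  (arrows_principal_bundle gD' lt') _ (arrows_translate_rep x0 gD' cf' mf').
exists w; split=> // c z e; rewrite -ind // (val_arrows_translate gD') //.
by have [mfs' _ _ _] := mf'; rewrite (mfs' c).1.
Qed.

Lemma factor_well_defined c1 c2 : f c1 = f c2 -> f' c1 = f' c2.
Proof.
have [w [_ wf]] := factor_translation_rep.
have [_ _ _ [mfs _ _ _] _] := gq; have [_ _ _ [mfs' _ _ _] _] := gq'.
move=> e; have [z pz] := arrows_tgt_surjective gD' lt' (src Dt c1).
have e2 : src Dt c2 = arrows_tgt z by rewrite -(mfs c2).1 -e (mfs c1).1.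
have z1 : src D' (f' c1) = tgt D' (val z) by rewrite (mfs' c1).1.
have z2 : src D' (f' c2) = tgt D' (val z) by rewrite (mfs' c2).1.
apply: (groupoid_cancel_r gD'.1.2 gD'.2 z1 z2).
by rewrite -wf // -wf // e.
Qed.

Section FactorMapProperties.
Variable h : C -> C'.
Hypothesis hf : forall c, h (f c) = f' c.

Lemma factor_morphism : is_morphism D D' h.
Proof.
have [_ _ _ [mfs mfc mfu mfb] _] := gq; have [_ _ _ [mfs' mfc' mfu' mfb'] _] := gq'.
split=> [y|y1 y2|x|y].
- have [c <-] := good_quotient_surjective y.
  by rewrite hf (mfs' c).1 (mfs' c).2 (mfs c).1 (mfs c).2.
- have [c1 <-] := good_quotient_surjective y1.
  have [c2 <-] := good_quotient_surjective y2.
  by rewrite (mfs c1).1 (mfs c2).2 => e; rewrite -mfc // !hf mfc'.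
- by rewrite -mfu hf mfu'.
- by have [c <-] := good_quotient_surjective y; rewrite -mfb !hf mfb'.
Qed.

(* Locally, h y = w y (\bar rho (src y)) * rho (src y) for a contraction rho. *)
Lemma factor_continuous : continuous h.
Proof.
have [w [hw wf]] := factor_translation_rep.
have [_ _ _ [mfs _ _ _] _] := gq; have [_ _ _ [mfs' _ _ _] _] := gq'.
have [[[cS _ _ _ _] _] _] := gD.
apply: cont_within_setT; apply: cont_within_local => y0 _.
have [U [[oU [rho [/cont_withinP crho rhoP]]] Uy0]] :=
  numerable_subordinate_cover lt' (src D y0).
exists (src D @^-1` U); split=> //; first by move/continuousP: cS; apply.
apply: (cont_within_ext
  (f := fun y => cmp D' (val (w y (arrows_section x0 gD' rho (src D y))))
                        (rho (src D y)))).
  move=> y [_ Uy]; have [c fc] := good_quotient_surjective y.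
  have Uc : U (src Dt c) by rewrite -(mfs c).1 fc.
  rewrite -fc (mfs c).1 hf wf; last by rewrite (arrows_tgt_section gD' rhoP).
  rewrite (val_arrows_section gD' rhoP) // (cmp_Kbar gD'.1.2 gD'.2) //.
  by rewrite (mfs' c).1 (rhoP _ Uc).1.
apply: (cmp_cont_within gD'.1).
- apply/cont_within_val/(rep_cont_within_comp hw).
  + exact: cont_within_id.
  + apply: (cont_within_comp (f := src D) (B := U)); last by move=> y [].
      exact: continuous_cont_within.
    exact: arrows_section_cont_within.
  + by move=> y [_ Uy]; rewrite (arrows_tgt_section gD' rhoP).
- apply: (cont_within_comp (f := src D) (B := U)) => //; last by move=> y [].
  exact: continuous_cont_within.
- by move=> y [_ Uy]; rewrite (set_valP (w y _)) (rhoP _ Uy).2.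
Qed.

End FactorMapProperties.

Lemma good_quotient_factor :
  exists h : C -> C', [/\ continuous h, is_morphism D D' h & forall c, h (f c) = f' c].
Proof.
pose h y := f' (projT1 (cid (good_quotient_surjective y))).
have hf c : h (f c) = f' c.
  by apply: factor_well_defined; rewrite /h; case: cid.
by exists h; split; [exact: factor_continuous|exact: factor_morphism|].
Qed.

End FactorMap.

Theorem proposition6p2 (X : topologicalType) (x0 : X) (Ct : topologicalType)
  (Dt : pgdata X Ct) :
  hausdorff_space X -> is_pregroupoid Dt -> locally_trivial_numerable x0 Dt ->
  exists (C : topologicalType) (D : pgdata X C) (f : Ct -> C),
    good_quotient x0 Dt D f /\
    forall (C' : topologicalType) (D' : pgdata X C') (f' : Ct -> C'),
      good_quotient x0 Dt D' f' ->
      exists (h : C -> C') (k : C' -> C),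
        [/\ continuous h /\ continuous k, cancel h k, cancel k h,
            is_morphism D D' h & forall c, h (f c) = f' c].
Proof.
move=> hX hD hL; have gq := quot_good_quotient hD hX hL.
exists (quot Dt), (quot_data Dt), (qclass Dt); split=> // C' D' f' gq'.
have [h [ch mh hf]] := good_quotient_factor gq gq'.
have [k [ck _ kf]] := good_quotient_factor gq' gq.
exists h, k; split=> //.
- by elim/quot_ind => c; rewrite hf kf.
- by move=> y; have [c <-] := good_quotient_surjective gq' y; rewrite kf hf.
Qed.
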